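(* Consider the semi-discrete Hermite–DG Vlasov–Maxwell system $\frac{dy}{dt}=\mathcal{F}^N(y)$ on $\mathbb{R}^M$ and the energies described in the context, and fix $\varepsilon\in\{0,1\}$. Let an explicit ${N_{RK}}$-stage Runge–Kutta method with ${N_{RK}}\ge2$, coefficients $(a_{ij})_{1\le j<i\le{N_{RK}}}$ and weights $(b_i)$ be given, and denote by $\varphi_{RK}(y^\tau)=y^\tau+\Delta t\sum_{i=1}^{{N_{RK}}}b_i\mathcal{F}^N(\mathcal{Y}_i)$ its step, with stages $\mathcal{Y}_1=y^\tau$, $\mathcal{Y}_i=y^\tau+\Delta t\sum_{j<i}a_{ij}\mathcal{F}^N(\mathcal{Y}_j)$. Let $\{y^\tau\}$ be the sequence produced from $y^0$ by the modified Runge–Kutta method $y^{\tau+1}=y^\tau+\gamma^\tau\Delta t\sum_{i=1}^{{N_{RK}}}b_i\mathcal{F}^N(\mathcal{Y}_i)$ (with the same stages). Set $\delta\mathcal{E}_{\mathbf{jump}}^{\tau,\tau+1}=\Delta t\sum_{i=1}^{{N_{RK}}}b_i\mathcal{E}_{\mathbf{jump}}(\mathcal{Y}_i)$ and $\delta\mathcal{E}_{\mathbf{bnd}}^{\tau,\tau+1}=\Delta t\sum_{i=1}^{{N_{RK}}}b_i\mathcal{E}_{\mathbf{bnd}}(\mathcal{Y}_i)$. Assume that for every $\tau$ $$\Big(\mathcal{E}_{\mathbf{tot}}(\varphi_{RK}(y^\tau))-\mathcal{E}_{\mathbf{tot}}(y^\tau)-\mathcal{E}_{E,B}(\varphi_{RK}(y^\tau)-y^\tau)+\delta\mathcal{E}_{\mathbf{bnd}}^{\tau,\tau+1}+\varepsilon\,\delta\mathcal{E}_{\mathbf{jump}}^{\tau,\tau+1}\Big)\,\mathcal{E}_{E,B}(\varphi_{RK}(y^\tau)-y^\tau)\neq0.$$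 Then, choosing for every $\tau$ $$\gamma^\tau=1-\frac{\mathcal{E}_{\mathbf{tot}}(\varphi_{RK}(y^\tau))-\mathcal{E}_{\mathbf{tot}}(y^\tau)+\delta\mathcal{E}_{\mathbf{bnd}}^{\tau,\tau+1}+\varepsilon\,\delta\mathcal{E}_{\mathbf{jump}}^{\tau,\tau+1}}{\mathcal{E}_{E,B}(\varphi_{RK}(y^\tau)-y^\tau)},$$ the discrete energy relation $$\mathcal{E}_{\mathbf{tot}}(y^{\tau+1})-\mathcal{E}_{\mathbf{tot}}(y^\tau)+\Delta t\sum_{i=1}^{{N_{RK}}}\widehat b_i\,\mathcal{E}_{\mathbf{bnd}}(\mathcal{Y}_i)=-\varepsilon\,\Delta t\sum_{i=1}^{{N_{RK}}}\widehat b_i\,\mathcal{E}_{\mathbf{jump}}(\mathcal{Y}_i),\qquad \widehat b_i:=\gamma^\tau b_i,$$ is satisfied for every $\tau$.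
   Context: Setting: the Vlasov–Maxwell system for $N_s$ plasma species with masses $m^s$, on a spatial domain $\Omega_x\subset\mathbb{R}^3$ partitioned into a uniform mesh of hexahedral cells $I$ with faces $\mathsf{f}$, velocity space $\mathbb{R}^3$. In the Hermite–DG semi-discretization each distribution function is $f^{s,N}(x,v,t)=\sum_{n,m,p}\sum_{I,l}C^{s,I,l}_{n,m,p}(t)\Psi_{n,m,p}(\xi^s)\varphi^{I,l}(x)$ (Hermite functions in velocity, piecewise polynomials in space) and the fields are piecewise polynomials $E^N=\sum_{I,l}E^{I,l}(t)\varphi^{I,l}$, $B^N=\sum_{I,l}B^{I,l}(t)\varphi^{I,l}$; Maxwell's equations are discretized with either central or upwind numerical fluxes. The coefficient vector $y(t)\in\mathbb{R}^M$ satisfies an autonomous ODE $dy/dt=\mathcal{F}^N(y)$. Energies: $\mathcal{E}_{\mathbf{kin}}(y)=\frac12\sum_s m^s\sum_I\int_I\int_{\mathbb{R}^3}|v|^2f^{s,N}\,dv\,dx$ (linear in $y$, $=\mu^\top y$); $\mathcal{E}_{E,B}(y)=\frac12(\omega_{ce}/\omega_{pe})^2\sum_I\int_I(|E^N|^2+|B^N|^2)\,dx$ (a quadratic form $y^\top Sy$ with $S$ symmetric, acting only on the field coefficients); $\mathcal{E}_{\mathbf{tot}}=\mathcal{E}_{\mathbf{kin}}+\mathcal{E}_{E,B}$; $\mathcal{E}_{\mathbf{bnd}}(y)=\frac12\sum_s m^s\int_{\partial\Omega_x}\int_{\mathbb{R}^3}(n\cdot v)|v|^2f^{s,N}\,dv\,dS$;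 $\mathcal{E}_{\mathbf{jump}}(y)=0$ for central Maxwell fluxes and $\mathcal{E}_{\mathbf{jump}}(y)=(\omega_{ce}/\omega_{pe})^2\sum_{\mathsf{f}}\frac12\int_{\mathsf{f}}[\![U]\!]_{\mathsf{f}}^\top|\mathbb{F}|[\![U]\!]_{\mathsf{f}}\,dS$ for upwind fluxes, with $U=(E^N,B^N)$, $[\![U]\!]_{\mathsf{f}}$ the jump across face $\mathsf{f}$ and $|\mathbb{F}|$ a fixed symmetric positive semidefinite $6\times6$ matrix (sum of the absolute values of the Maxwell flux matrices). *)

(* Abstract algebraic model of the Hermite-DG semi-discretization:
   coefficient vectors y : 'cV[R]_M, right-hand side F : 'cV_M -> 'cV_M,
   E_kin(y) = mu^T y, E_{E,B}(y) = y^T S y (S symmetric; the factor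
   (omega_ce/omega_pe)^2 is absorbed in S), E_bnd, E_jump given functions. *)
From mathcomp Require Import all_boot all_order all_algebra.
Set Implicit Arguments. Unset Strict Implicit. Unset Printing Implicit Defensive.
Import Order.TTheory GRing.Theory Num.Theory.
Local Open Scope ring_scope.

Section Defs.
Variables (R : realFieldType) (M : nat).
Local Notation vec := 'cV[R]_M.

Definition Ekin (mu : vec) (y : vec) : R := (mu^T *m y) 0 0.
Definition EEB (S : 'M[R]_M) (y : vec) : R := (y^T *m S *m y) 0 0.
Definition Etot (mu : vec) (S : 'M[R]_M) (y : vec) : R := Ekin mu y + EEB S y.

(* stages k = [:: Y_1; ...; Y_k] (0-based in Rocq: nth 0 (stages k) i = Y_{i+1}),
   Y_{i+1} = y + dt * sum_{j < i} a i j F(Y_{j+1}). *)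
Fixpoint stages (F : vec -> vec) (a : nat -> nat -> R) (dt : R) (y : vec)
    (k : nat) : seq vec :=
  match k with
  | 0 => [::]
  | k'.+1 => let s := stages F a dt y k' in
      rcons s (y + dt *: \sum_(j < k') (a k' j *: F (nth 0 s j)))
  end.

Definition stage F a dt y (NRK i : nat) : vec := nth 0 (stages F a dt y NRK) i.

Definition rk_incr F a (b : nat -> R) dt y NRK : vec :=
  \sum_(i < NRK) (b i *: F (stage F a dt y NRK i)).

Definition phiRK F a b dt y NRK : vec := y + dt *: rk_incr F a b dt y NRK.

Definition rk_quad F a (c : nat -> R) dt y NRK (G : vec -> R) : R :=
  dt * \sum_(i < NRK) (c i * G (stage F a dt y NRK i)).

Definition gammaRK (mu : vec) (S : 'M[R]_M) F a b dt NRK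
    (Ebnd Ejump : vec -> R) (eps : R) (y : vec) : R :=
  let p := phiRK F a b dt y NRK in
  1 - (Etot mu S p - Etot mu S y + rk_quad F a b dt y NRK Ebnd
        + eps * rk_quad F a b dt y NRK Ejump) / EEB S (p - y).

End Defs.

(** The total energy is linear plus a quadratic form, so along the update
    direction [d = phi_RK(y) - y] the defect [c |-> E_tot(y + c d) - E_tot(y)
    + c r], with [r] the boundary and jump contributions of the unrelaxed step,
    is a quadratic polynomial vanishing at [c = 0] with leading coefficient
    [E_{E,B}(d)].  The relaxation parameter [gamma] is its other root.  Only
    [E_{E,B}(d) <> 0] is needed. *)

From mathcomp Require Import all_boot all_order all_algebra.
From mathcomp Require Import ring.
Set Implicit Arguments. Unset Strict Implicit. Unset Printing Implicit Defensive.
Import Order.TTheory GRing.Theory Num.Theory.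
Local Open Scope ring_scope.

Lemma sym_form_swap (R : comPzRingType) (M : nat) (S : 'M[R]_M) (u v : 'cV[R]_M) :
  S^T = S -> v^T *m S *m u = u^T *m S *m v.
Proof.
move=> symS; rewrite [LHS]mx11_scalar -tr_scalar_mx -mx11_scalar.
by rewrite !trmx_mul trmxK symS mulmxA.
Qed.

Lemma relaxation_root (R : fieldType) (D q r : R) : q != 0 ->
  let g := 1 - (D + r) / q in g * (D - q) + g ^+ 2 * q + g * r = 0.
Proof. by move=> q_neq0 /=; field. Qed.

Lemma Etot_shift (R : realFieldType) (M : nat) (mu : 'cV[R]_M) (S : 'M[R]_M)
    (u v : 'cV[R]_M) (c : R) : S^T = S ->
  Etot mu S (u + c *: v) - Etot mu S u
  = c * (Etot mu S (u + v) - Etot mu S u - EEB S v) + c ^+ 2 * EEB S v.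
Proof.
move=> symS; rewrite /Etot /Ekin /EEB !linearD !linearZ /= !mulmxDl -!scalemxAl.
rewrite (sym_form_swap u v symS) !mxE.
ring.
Qed.

Lemma rk_quad_scale (R : realFieldType) (M : nat) (F : 'cV[R]_M -> 'cV[R]_M)
    a (b : nat -> R) dt y NRK (G : 'cV[R]_M -> R) (g : R) :
  rk_quad F a (fun i => g * b i) dt y NRK G = g * rk_quad F a b dt y NRK G.
Proof.
rewrite /rk_quad [RHS]mulrCA [in RHS]big_distrr /=.
by congr (dt * _); apply: eq_bigr => i _; rewrite mulrA.
Qed.

Lemma phiRK_sub (R : realFieldType) (M : nat) (F : 'cV[R]_M -> 'cV[R]_M)
    a (b : nat -> R) dt y NRK :
  phiRK F a b dt y NRK - y = dt *: rk_incr F a b dt y NRK.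
Proof. by rewrite /phiRK addrC addKr. Qed.

Theorem theorem2 (R : realFieldType) (M : nat) (mu : 'cV[R]_M) (S : 'M[R]_M)
    (F : 'cV[R]_M -> 'cV[R]_M) (Ebnd Ejump : 'cV[R]_M -> R)
    (eps : R) (NRK : nat) (a : nat -> nat -> R) (b : nat -> R) (dt : R)
    (y : nat -> 'cV[R]_M) :
  S^T = S ->
  (eps = 0 \/ eps = 1) ->
  (2 <= NRK)%N ->
  (forall tau,
     let p := phiRK F a b dt (y tau) NRK in
     (Etot mu S p - Etot mu S (y tau) - EEB S (p - y tau)
        + rk_quad F a b dt (y tau) NRK Ebnd
        + eps * rk_quad F a b dt (y tau) NRK Ejump)
     * EEB S (p - y tau) != 0) ->
  (forall tau,
     y tau.+1 = y tau + (gammaRK mu S F a b dt NRK Ebnd Ejump eps (y tau) * dt)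
                        *: rk_incr F a b dt (y tau) NRK) ->
  forall tau,
    let g := gammaRK mu S F a b dt NRK Ebnd Ejump eps (y tau) in
    let bhat := fun i => g * b i in
    Etot mu S (y tau.+1) - Etot mu S (y tau)
      + rk_quad F a bhat dt (y tau) NRK Ebnd
    = - (eps * rk_quad F a bhat dt (y tau) NRK Ejump).
Proof.
move=> symS _ _ nondegenerate step tau g bhat.
apply/eqP; rewrite -subr_eq0 opprK -addrA !rk_quad_scale (mulrCA eps) -mulrDr.
have := nondegenerate tau; rewrite /= phiRK_sub mulf_eq0 negb_or.
set d := dt *: _ => /andP[_ Q_neq0].
have phi_d : phiRK F a b dt (y tau) NRK = y tau + d by [].
rewrite step -scalerA -/d Etot_shift // /g /gammaRK /= phiRK_sub -/d phi_d.
set D := Etot mu S (y tau + d) - _; set r := rk_quad _ _ _ _ _ _ Ebnd + _.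
by rewrite -(addrA D) -/r (relaxation_root D r Q_neq0).
Qed.
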